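(* Let $K$ be a field of characteristic $0$ and let $m=x_1^{\alpha_1}\cdots x_n^{\alpha_n}$ with $\alpha_i\ge1$ for all $i$. Then the Lie algebra $\mathfrak{g}_m$ is the space of diagonal matrices $\mathrm{diag}(\lambda_1,\ldots,\lambda_n)$ such that $\sum_{i=1}^n\alpha_i\lambda_i=0$.
   Context: For $P\in K[x_1,\ldots,x_n]$, the Lie algebra $\mathfrak{g}_P$ of $P$ is the Lie algebra (tangent space at the identity) of the group of invariants $\{A\in GL_n(K): P(A.x)=P(x)\}$; equivalently, $\mathfrak{g}_P$ is the linear subspace of matrices $A=(a_{ij})\in M_n(K)$ such that $\sum_{i,j\in[n]} a_{ij}\,x_j\,\frac{\partial P}{\partial x_i}=0$. *)

From HB Require Import structures.
From mathcomp Require Import all_boot all_order all_algebra.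
From mathcomp Require Import mpoly.
Set Implicit Arguments. Unset Strict Implicit. Unset Printing Implicit Defensive.
Import Order.TTheory GRing.Theory.
Local Open Scope ring_scope.

(* Lie algebra of a polynomial P in K[x_1..x_n]: matrices A = (a_ij) with
   sum_{i,j} a_ij x_j dP/dx_i = 0. Indices are 'I_n (0-based). *)
Definition lie_algebra (K : fieldType) (n : nat) (P : {mpoly K[n]})
  : pred 'M[K]_n :=
  fun A => (\sum_(i < n) \sum_(j < n) A i j *: ('X_j * mderiv i P)) == 0.

Definition monomial (K : fieldType) (n : nat) (alpha : 'I_n -> nat)
  : {mpoly K[n]} := \prod_(i < n) 'X_i ^+ alpha i.

From HB Require Import structures.
From mathcomp Require Import all_boot all_order all_algebra.
From mathcomp Require Import mpoly.

Set Implicit Arguments.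
Unset Strict Implicit.
Unset Printing Implicit Defensive.

Import Order.TTheory GRing.Theory.
Local Open Scope ring_scope.

(* The operator A |-> sum_(i,j) a_ij x_j d/dx_i sends x^alpha to
   sum_(i,j) alpha_i a_ij x^(alpha - e_i + e_j).  As every alpha_i >= 1, the
   exponents alpha - e_i + e_j with i <> j are pairwise distinct and differ
   from alpha, so the coefficient alpha_i a_ij of x^(alpha - e_i + e_j) must
   vanish, i.e. A is diagonal in characteristic 0; on diagonal matrices the
   operator is multiplication by sum_i alpha_i a_ii (Euler's identity
   x_i d/dx_i x^alpha = alpha_i x^alpha). *)

Section MultinomShift.
Variable n : nat.

Lemma mnm1_inj : injective (fun i : 'I_n => U_(i)%MM).
Proof. by move=> i i' /= /mnmP/(_ i'); rewrite !mnm1E eqxx; case: eqP. Qed.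

Lemma mnm1D_eq (i j i' j' : 'I_n) :
  (U_(j) + U_(i') = U_(j') + U_(i))%MM -> (i = j /\ i' = j') \/ (i = i' /\ j = j').
Proof.
move=> eqD; have : (j' == j) || (i == j).
  by move/mnmP/(_ j): eqD; rewrite !mnmDE !mnm1E eqxx; case: (j' == j); case: (i == j).
case/orP=> /eqP eq_j.
- rewrite eq_j in eqD; right; split=> //.
  by apply/esym/mnm1_inj/(addmI eqD).
- rewrite -eq_j [RHS]addmC in eqD; left; split=> //.
  by apply/mnm1_inj/(addmI eqD).
Qed.

Variable m : 'X_{1..n}.

Lemma addm_subm1K (i j : 'I_n) :
  (0 < m i)%N -> (m - U_(i) + U_(j) + U_(i) = m + U_(j))%MM.
Proof.
by move=> m_i_gt0; rewrite -addmA [(U_(j) + _)%MM]addmC addmA submK ?lep1mP -?lt0n.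
Qed.

Lemma mnm_shift_inj (i j i' j' : 'I_n) :
  (0 < m i)%N -> (0 < m i')%N -> i != j ->
  (m - U_(i) + U_(j) = m - U_(i') + U_(j'))%MM -> i = i' /\ j = j'.
Proof.
move=> m_i_gt0 m_i'_gt0 neq_ij eq_shift.
have eqD : (U_(j) + U_(i') = U_(j') + U_(i))%MM.
  apply: (@addmI _ m); rewrite !addmA -(addm_subm1K j m_i_gt0) eq_shift.
  by rewrite -addmA [(U_(i) + _)%MM]addmC addmA addm_subm1K.
by move: eqD => /mnm1D_eq [[eq_ij _]|//]; rewrite eq_ij eqxx in neq_ij.
Qed.

End MultinomShift.

Section MatrixDerivation.
Variables (R : comNzRingType) (n : nat).

Definition mx_derivation (A : 'M[R]_n) (P : {mpoly R[n]}) : {mpoly R[n]} :=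
  \sum_(i < n) \sum_(j < n) A i j *: ('X_j * mderiv i P).

Lemma mulX_mderivX (i j : 'I_n) (m : 'X_{1..n}) :
  'X_j * mderiv i 'X_[m] = (m i)%:R *: 'X_[(m - U_(i) + U_(j))%MM] :> {mpoly R[n]}.
Proof. by rewrite mderivX -scalerAr -mpolyXD addmC. Qed.

Lemma mulX_mderivX_id (i : 'I_n) (m : 'X_{1..n}) :
  'X_i * mderiv i 'X_[m] = (m i)%:R *: 'X_[m] :> {mpoly R[n]}.
Proof.
rewrite mulX_mderivX; have [->|m_i_gt0] := posnP (m i); first by rewrite !scale0r.
by rewrite submK // lep1mP -lt0n.
Qed.

Lemma mx_derivation_diag (d : 'rV[R]_n) P :
  mx_derivation (diag_mx d) P = \sum_(i < n) d 0 i *: ('X_i * mderiv i P).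
Proof.
apply: eq_bigr => i _; rewrite (bigD1 i) //= big1 ?addr0 => [|j neq_ji].
  by rewrite mxE eqxx mulr1n.
by rewrite mxE eq_sym (negbTE neq_ji) mulr0n scale0r.
Qed.

Lemma mx_derivation_diagX (d : 'rV[R]_n) (m : 'X_{1..n}) :
  mx_derivation (diag_mx d) 'X_[m] = (\sum_(i < n) (m i)%:R * d 0 i) *: 'X_[m].
Proof.
rewrite mx_derivation_diag scaler_suml; apply: eq_bigr => i _.
by rewrite mulX_mderivX_id scalerA mulrC.
Qed.

Lemma mcoeff_mx_derivationX (A : 'M[R]_n) (m k : 'X_{1..n}) :
  (mx_derivation A 'X_[m])@_k =
  \sum_(p : 'I_n * 'I_n) A p.1 p.2 * (m p.1)%:R * ((m - U_(p.1) + U_(p.2))%MM == k)%:R.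
Proof.
rewrite /mx_derivation pair_bigA raddf_sum; apply: eq_bigr => -[i j] _ /=.
by rewrite mulX_mderivX scalerA mcoeffZ mcoeffX.
Qed.

Lemma mcoeff_mx_derivationX_shift (A : 'M[R]_n) (m : 'X_{1..n}) (i j : 'I_n) :
  (forall l, 0 < m l)%N -> i != j ->
  (mx_derivation A 'X_[m])@_(m - U_(i) + U_(j))%MM = A i j * (m i)%:R.
Proof.
move=> m_gt0 neq_ij; rewrite mcoeff_mx_derivationX (bigD1 (i, j)) //= eqxx mulr1.
rewrite big1 ?addr0 // => -[i' j'] /= neq_p.
have [/esym/(mnm_shift_inj (m_gt0 _) (m_gt0 _) neq_ij) [eq_i eq_j]|_] := eqVneq.
  by rewrite -eq_i -eq_j eqxx in neq_p.
by rewrite mulr0.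
Qed.

End MatrixDerivation.

Lemma lie_algebraE (K : fieldType) (n : nat) (P : {mpoly K[n]}) (A : 'M[K]_n) :
  (A \in lie_algebra P) = (mx_derivation A P == 0).
Proof. by []. Qed.

Lemma monomialE (K : fieldType) (n : nat) (alpha : 'I_n -> nat) :
  monomial K alpha = 'X_[[multinom alpha i | i < n]].
Proof. by rewrite mpolyXE_id; apply: eq_bigr => i _; rewrite mnmE. Qed.

Theorem proposition4 (K : fieldType) (n : nat) (alpha : 'I_n -> nat) :
  [pchar K] =i pred0 ->
  (forall i, (1 <= alpha i)%N) ->
  forall A : 'M[K]_n,
    A \in lie_algebra (monomial K alpha) <->
    exists lambda : 'rV[K]_n,
      A = diag_mx lambda /\ \sum_(i < n) (alpha i)%:R * lambda 0 i = 0.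
Proof.
move=> /pcharf0P char0 alpha_gt0 A; set a := [multinom alpha i | i < n].
have a_gt0 l : (0 < a l)%N by rewrite mnmE alpha_gt0.
have sum_aE (d : 'rV[K]_n) :
    \sum_(i < n) (a i)%:R * d 0 i = \sum_(i < n) (alpha i)%:R * d 0 i.
  by apply: eq_bigr => i _; rewrite mnmE.
rewrite lie_algebraE monomialE -/a; split=> [/eqP derA0|[d [-> sum0]]]; last first.
  by rewrite mx_derivation_diagX sum_aE sum0 scale0r.
have /diag_mxP [d A_d] : is_diag_mx A.
  apply/is_diag_mxP => i j neq_ij.
  have := mcoeff_mx_derivationX_shift A a_gt0 neq_ij.
  rewrite derA0 mcoeff0 => /esym/eqP.
  by rewrite mulf_eq0 char0 eqn0Ngt a_gt0 orbF => /eqP.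
exists d; split=> //.
move/(congr1 (mcoeff a)): derA0.
by rewrite A_d mx_derivation_diagX mcoeffZ mcoeffX eqxx mulr1 mcoeff0 sum_aE.
Qed.
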